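(* Let $C=\begin{pmatrix}1&-2\\2&-1\end{pmatrix}$, let $n\ge 3$ be an odd integer, and put $\omega=e^{2\pi i/n}$, $\xi=e^{\pi i/3}$, $\eta=e^{\pi i/(2n)}$. For $0\le j,k\le n-1$ define $$X_{n,j,k}=\frac{(-1)^{(n+1)/2}}{i}\begin{pmatrix}-\xi^{-1}\eta\,\omega^{j}+\xi\,\eta^{-1}\omega^{k} & \eta\,\omega^{j}-\eta^{-1}\omega^{k}\\ -\eta\,\omega^{j}+\eta^{-1}\omega^{k} & \xi\,\eta\,\omega^{j}-\xi^{-1}\eta^{-1}\omega^{k}\end{pmatrix}.$$ Then the set of complex $2\times 2$ matrices $X$ satisfying $X^n=C^n$ is exactly $\{X_{n,j,k}:0\le j,k\le n-1\}$, and these $n^2$ matrices are pairwise distinct; in particular $X^n=C^n$ has exactly $n^2$ solutions.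
   Context: $i$ denotes the imaginary unit; all matrices have complex entries. *)

From HB Require Import structures.
From mathcomp Require Import all_boot all_order all_algebra.
From mathcomp Require Import all_classical all_reals all_analysis.
From mathcomp Require Import complex.
Set Implicit Arguments. Unset Strict Implicit. Unset Printing Implicit Defensive.
Import Order.TTheory GRing.Theory Num.Theory.
Local Open Scope ring_scope.
Local Open Scope complex_scope.

Definition expi (R : realType) (t : R) : R[i] := (cos t +i* sin t).

Definition Cmat (R : realType) : 'M[R[i]]_2 :=
  \matrix_(r < 2, c < 2)
    (if (val r == 0%N) then (if val c == 0%N then 1 else -2)
     else (if val c == 0%N then 2 else -1)).

Definition omega (R : realType) (n : nat) : R[i] := expi (2 * pi / n%:R).
Definition xi (R : realType) : R[i] := expi (pi / 3).
Definition eta (R : realType) (n : nat) : R[i] := expi (pi / (2 * n%:R)).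

Definition Xmat (R : realType) (n j k : nat) : 'M[R[i]]_2 :=
  let w := @omega R n in let x := @xi R in let e := @eta R n in
  let a := e * w ^+ j in let b := e^-1 * w ^+ k in
  ((-1) ^+ ((n + 1) %/ 2) / 'i) *:
  \matrix_(r < 2, c < 2)
    (if (val r == 0%N) then
       (if val c == 0%N then - x^-1 * a + x * b else a - b)
     else
       (if val c == 0%N then - a + b else x * a - x^-1 * b)).

From Pilot Require Import Defs.
From HB Require Import structures.
From mathcomp Require Import all_boot all_order all_algebra.
From mathcomp Require Import all_classical all_reals all_analysis.
From mathcomp Require Import complex.
From mathcomp Require Import ring lra.
Set Implicit Arguments.
Unset Strict Implicit.
Unset Printing Implicit Defensive.

(* Put d = xi - xi^-1, so that d^2 = -3 and C^2 = d^2.  Then P = (d + C) / (2 d)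
   is an idempotent with C = d P - d (1 - P).  As n is odd, C^n = d^(n-1) C, so
   any solution of X^n = C^n commutes with C; a matrix commuting with a
   non-scalar 2x2 matrix C is of the form a + b C, hence X = p P + q (1 - P) and
   X^n = p^n P + q^n (1 - P).  Thus X^n = C^n amounts to p^n = d^n and
   q^n = (-d)^n, i.e. p = s d eta^-1 omega^k and q = s d eta omega^j with
   s = (-1)^((n+1)/2) / i, and these are the coordinates of X_{n,j,k}.
   Distinctness follows since P <> 0, 1 and omega is a primitive n-th root of
   unity. *)

Import Order.TTheory GRing.Theory Num.Theory.
Local Open Scope ring_scope.

Section IdempotentSplitting.
Variables (K : fieldType) (A : algType K) (e : A).
Hypothesis e_idem : e * e = e.

Lemma idem_combM (a b a' b' : K) :
  (a *: e + b *: (1 - e)) * (a' *: e + b' *: (1 - e)) =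
  (a * a') *: e + (b * b') *: (1 - e).
Proof.
have e1e : e * (1 - e) = 0 by rewrite mulrBr mulr1 e_idem subrr.
have e1e' : (1 - e) * e = 0 by rewrite mulrBl mul1r e_idem subrr.
have idem1e : (1 - e) * (1 - e) = 1 - e by rewrite mulrBl mul1r e1e subr0.
rewrite mulrDl !mulrDr -!scalerAl -!scalerAr !scalerA.
by rewrite e_idem e1e e1e' idem1e !scaler0 addr0 add0r.
Qed.

Lemma idem_combX (a b : K) n :
  (a *: e + b *: (1 - e)) ^+ n = a ^+ n *: e + b ^+ n *: (1 - e).
Proof.
elim: n => [|n IHn]; first by rewrite !expr0 !scale1r addrC subrK.
by rewrite exprS IHn idem_combM -!exprS.
Qed.

Lemma idem_comb_affine (a b p q : K) :
  a%:A + b *: (p *: e + q *: (1 - e)) = (a + b * p) *: e + (a + b * q) *: (1 - e).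
Proof.
have -> : a%:A = a *: e + a *: (1 - e) :> A by rewrite -scalerDr addrC subrK.
by rewrite [b *: _]scalerDr !scalerA addrACA -!scalerDl.
Qed.

Lemma idem_comb_inj (a b a' b' : K) : e != 0 -> e != 1 ->
  a *: e + b *: (1 - e) = a' *: e + b' *: (1 - e) -> a = a' /\ b = b'.
Proof.
move=> e_neq0 e_neq1 eq_comb.
have scaleI (x : A) (k k' : K) : x != 0 -> k *: x = k' *: x -> k = k'.
  move=> x_neq0 /eqP; rewrite -subr_eq0 -scalerBl scaler_eq0 (negbTE x_neq0).
  by rewrite orbF subr_eq0 => /eqP.
split.
- apply: (scaleI e) => //.
  have := congr1 (fun x => (1 *: e + 0 *: (1 - e)) * x) eq_comb.
  by rewrite /= !idem_combM !mul1r !mul0r !scale0r !addr0.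
- apply: (scaleI (1 - e)); first by rewrite subr_eq0 eq_sym.
  have := congr1 (fun x => (0 *: e + 1 *: (1 - e)) * x) eq_comb.
  by rewrite /= !idem_combM !mul1r !mul0r !scale0r !add0r.
Qed.

End IdempotentSplitting.

Section SquareRootOfScalar.
Variables (K : fieldType) (A : algType K) (c : A) (m : K).
Hypotheses (two_neq0 : 2 != 0 :> K) (m_neq0 : m != 0) (sqr_c : c ^+ 2 = (m ^+ 2)%:A).

Definition eigproj : A := (2 * m)^-1 *: (m%:A + c).

Lemma eigproj_idem : eigproj * eigproj = eigproj.
Proof.
have sqr_shift : (m%:A + c) * (m%:A + c) = (2 * m) *: (m%:A + c).
  rewrite mulrDl !mulrDr !mulr_algl mulr_algr -expr2 sqr_c !scalerA !scalerDr.
  by rewrite scalerA [m *: c + _]addrC addrACA -!scalerDl; congr (_ *: _ + _ *: _); ring.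
by rewrite /eigproj -scalerAl -scalerAr sqr_shift !scalerA mulfVK // mulf_neq0.
Qed.

Lemma eigproj_comb : c = m *: eigproj + (- m) *: (1 - eigproj).
Proof.
have twice_eigproj : 2 *: eigproj = m^-1 *: (m%:A + c).
  by rewrite /eigproj scalerA invfM mulrA mulfV // mul1r.
rewrite scaleNr -scalerBr opprB addrA -mulr2n -scaler_nat twice_eigproj.
by rewrite scalerBr scalerA mulfV // scale1r addrC addKr.
Qed.

Lemma eigproj_nontrivial : (forall a : K, c != a%:A) -> eigproj != 0 /\ eigproj != 1.
Proof.
move=> c_nonscalar; have twice_m_neq0 : 2 * m != 0 by rewrite mulf_neq0.
split; apply/eqP => /(congr1 ( *:%R (2 * m))); rewrite /eigproj scalerA mulfV // scale1r.
- rewrite scaler0 => /eqP; rewrite addrC addr_eq0 => /eqP c_eq.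
  by have := c_nonscalar (- m); rewrite c_eq scaleNr eqxx.
- move=> shift_eq; have c_eq : c = m%:A.
    rewrite -(addKr m%:A c) shift_eq addrC -scalerBl; congr (_ *: _); ring.
  by have := c_nonscalar m; rewrite c_eq eqxx.
Qed.

Lemma expr_odd_sqrt n : odd n -> c ^+ n = m ^+ n.-1 *: c.
Proof.
move=> odd_n; rewrite -(odd_double_half n) odd_n -muln2 mulnC /=.
by rewrite exprS exprM sqr_c exprZn expr1n mulr_algr -exprM.
Qed.

End SquareRootOfScalar.

Lemma commr_unscale (K : fieldType) (A : algType K) (x c : A) (k : K) :
  k != 0 -> GRing.comm x (k *: c) -> GRing.comm x c.
Proof. by move=> k_neq0; rewrite /GRing.comm -scalerAr -scalerAl => /(scalerI k_neq0). Qed.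

Lemma ord2_cases (i : 'I_2) : i = 0 \/ i = 1.
Proof. by case: i => [[|[|//]]] i_lt2; [left | right]; apply: val_inj. Qed.

Lemma mulmx2E (K : pzRingType) (X Y : 'M[K]_2) i j :
  (X * Y) i j = X i 0 * Y 0 j + X i 1 * Y 1 j.
Proof.
by rewrite -mulmxE mxE !big_ord_recl big_ord0 addr0 (_ : lift ord0 ord0 = 1) //; apply: val_inj.
Qed.

Lemma mx2_comm_affine (K : fieldType) (C X : 'M[K]_2) :
  C 0 1 != 0 -> GRing.comm X C -> exists a b : K, X = a%:A + b *: C.
Proof.
move=> C01_neq0 /matrixP XC_CX.
have := XC_CX 0 0; have := XC_CX 0 1; rewrite !mulmx2E => eq01 eq00.
exists (X 0 0 - X 0 1 / C 0 1 * C 0 0), (X 0 1 / C 0 1).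
have X10E : X 1 0 = X 0 1 * C 1 0 / C 0 1.
  apply: (mulIf C01_neq0); rewrite mulfVK // mulrC.
  by move: eq00; rewrite [C 0 0 * _]mulrC => /addrI.
have X11E : X 1 1 = X 0 0 + X 0 1 * (C 1 1 - C 0 0) / C 0 1.
  apply: (mulIf C01_neq0); rewrite mulrDl mulfVK // [X 1 1 * _]mulrC.
  by apply: (addrI (C 0 0 * X 0 1)); rewrite -eq01; ring.
apply/matrixP => i j; rewrite !mxE.
by case: (ord2_cases i) => ->; case: (ord2_cases j) => ->;
  rewrite /= ?X10E ?X11E; field; rewrite C01_neq0.
Qed.

Section NthRoots.
Variables (F : fieldType) (n : nat) (w : F).
Hypothesis w_prim : n.-primitive_root w.

Lemma exprn_eq_mul_prim_root (z0 z : F) : z0 != 0 ->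
  z ^+ n = z0 ^+ n <-> exists j : 'I_n, z = z0 * w ^+ j.
Proof.
move=> z0_neq0; split=> [zn_eq | [j ->]].
  have : (z / z0) ^+ n = 1 by rewrite expr_div_n zn_eq divff // expf_neq0.
  case/(prim_rootP w_prim) => j z_eq.
  by exists j; rewrite -z_eq mulrC divfK.
by rewrite exprMn exprAC (prim_expr_order w_prim) expr1n mulr1.
Qed.

Lemma mul_prim_root_inj (z0 : F) (j k : 'I_n) : z0 != 0 ->
  z0 * w ^+ j = z0 * w ^+ k -> j = k.
Proof.
move=> z0_neq0 /(mulfI z0_neq0)/eqP; rewrite (eq_prim_root_expr w_prim).
by rewrite !modn_small // => /eqP /val_inj.
Qed.

End NthRoots.

Local Open Scope complex_scope.

Section ComplexExponential.
Variable R : realType.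

Lemma i_neq0 : 'i != 0 :> R[i].
Proof. by rewrite eq_complex /= oner_eq0 andbF. Qed.

Lemma expiD (s t : R) : expi (s + t) = expi s * expi t.
Proof.
rewrite /expi -[(_ +i* _) * (_ +i* _)]/(_ +i* _) sinD cosD.
by congr (_ +i* _); ring.
Qed.

Lemma expiX (t : R) n : expi t ^+ n = expi (t *+ n).
Proof.
elim: n => [|n IHn]; first by rewrite /expi mulr0n cos0 sin0.
by rewrite exprS IHn mulrS expiD.
Qed.

Lemma expi_pi : expi (pi : R) = -1.
Proof. by rewrite /expi cospi sinpi; apply/eqP; rewrite eq_complex /= oppr0 !eqxx. Qed.

Lemma expi_pihalf : expi (pi / 2 : R) = 'i.
Proof. by rewrite /expi cos_pihalf sin_pihalf. Qed.

Lemma expi_neq0 (t : R) : expi t != 0.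
Proof.
apply/eqP => /eqP; rewrite eq_complex /= => /andP[/eqP cos0 /eqP sin0].
by have := cos2Dsin2 t; rewrite cos0 sin0 expr0n addr0 => /eqP; rewrite eq_sym oner_eq0.
Qed.

Lemma expi_neq1 (t : R) : 0 < t < pi *+ 2 -> expi t != 1.
Proof.
move=> t_bounds; have sin_half_gt0 : 0 < sin (t / 2).
  by apply: sin_gt0_pi; move: t_bounds; rewrite mulr2n; lra.
have -> : expi t = expi (t / 2) ^+ 2.
  by rewrite expiX -[t / 2 *+ 2]mulr_natr divfK // pnatr_eq0.
rewrite sqrf_eq1 negb_or !eq_complex /= !negb_and.
by rewrite oppr0 (gt_eqF sin_half_gt0) /= !orbT.
Qed.

End ComplexExponential.

Section Solutions.
Variable R : realType.

Lemma xi_sqr : xi R ^+ 2 = xi R - 1.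
Proof.
have xi_cube : xi R ^+ 3 = -1.
  by rewrite /xi expiX -[_ *+ 3]mulr_natr divfK ?pnatr_eq0 // expi_pi.
have xi_neqN1 : xi R != -1.
  rewrite /xi /expi eq_complex /= negb_and gt_eqF ?orbT //.
  by apply: lt_trans (cos_gt0_pihalf _); rewrite ?ltrN10 //; have := @pi_gt0 R; lra.
have : (xi R + 1) * (xi R ^+ 2 - xi R + 1) = 0.
  by rewrite (_ : _ * _ = xi R ^+ 3 + 1); [rewrite xi_cube addNr | ring].
move/eqP; rewrite mulf_eq0 addr_eq0 (negbTE xi_neqN1) /= => /eqP xi_quad.
by rewrite -[LHS]subr0 -xi_quad; ring.
Qed.

Lemma xiV : (xi R)^-1 = 1 - xi R.
Proof.
have xi_neq0 : xi R != 0 by exact: expi_neq0.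
apply: (mulIf xi_neq0); rewrite mulVf //.
by rewrite mulrBl mul1r -expr2 xi_sqr; ring.
Qed.

Local Notation d := (xi R - (xi R)^-1).

Lemma sqr_xi_subV : d ^+ 2 = -3.
Proof.
rewrite xiV (_ : (_ - _) ^+ 2 = 4 * xi R ^+ 2 - 4 * xi R + 1); last by ring.
by rewrite xi_sqr; ring.
Qed.

Lemma xi_subV_neq0 : d != 0.
Proof.
apply: contra_eq_neq sqr_xi_subV => ->.
by rewrite expr0n eq_sym oppr_eq0 pnatr_eq0.
Qed.

Lemma Cmat_sqr : Cmat R ^+ 2 = (d ^+ 2)%:A.
Proof.
rewrite sqr_xi_subV; apply/matrixP => i j; rewrite expr2 mulmx2E !mxE.
by case: (ord2_cases i) => ->; case: (ord2_cases j) => ->; rewrite /=; ring.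
Qed.

Lemma Cmat01_neq0 : Cmat R 0 1 != 0.
Proof. by rewrite mxE /= oppr_eq0 pnatr_eq0. Qed.

Lemma Cmat_nonscalar (a : R[i]) : Cmat R != a%:A.
Proof.
apply: contra_neq Cmat01_neq0 => ->.
by rewrite !mxE /= mulr0.
Qed.

Section OddExponent.
Variable n : nat.
Hypothesis n_odd : odd n.

Local Notation P := (eigproj (Cmat R) d).

Let two_neq0 : 2 != 0 :> R[i]. Proof. by rewrite pnatr_eq0. Qed.
Let P_idem : P * P = P := eigproj_idem two_neq0 xi_subV_neq0 Cmat_sqr.
Let Cmat_comb : Cmat R = d *: P + (- d) *: (1 - P) :=
  eigproj_comb (Cmat R) two_neq0 xi_subV_neq0.

Lemma Cmat_root_eigcomb (X : 'M[R[i]]_2) :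
  X ^+ n = Cmat R ^+ n <->
  exists p q : R[i], [/\ X = p *: P + q *: (1 - P), p ^+ n = d ^+ n & q ^+ n = (- d) ^+ n].
Proof.
split=> [Xn_eq | [p [q [-> pn_eq qn_eq]]]]; last first.
  by rewrite idem_combX // pn_eq qn_eq -idem_combX // -Cmat_comb.
have comm_XC : GRing.comm X (Cmat R).
  apply: (@commr_unscale _ _ _ _ (d ^+ n.-1)); first by rewrite expf_neq0 // xi_subV_neq0.
  by rewrite -(expr_odd_sqrt Cmat_sqr n_odd) -Xn_eq; apply/commrX/commr_refl.
have [a [b X_eq]] := mx2_comm_affine Cmat01_neq0 comm_XC.
have X_comb : X = (a + b * d) *: P + (a + b * - d) *: (1 - P).
  by rewrite X_eq -idem_comb_affine // -Cmat_comb.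
have [P_neq0 P_neq1] := eigproj_nontrivial two_neq0 xi_subV_neq0 Cmat_nonscalar.
have [pn_eq qn_eq] : (a + b * d) ^+ n = d ^+ n /\ (a + b * - d) ^+ n = (- d) ^+ n.
  move: Xn_eq; rewrite [in LHS]X_comb [in RHS]Cmat_comb !idem_combX //.
  exact: idem_comb_inj.
by exists (a + b * d), (a + b * - d).
Qed.

Local Notation s := ((-1) ^+ ((n + 1) %/ 2) / 'i : R[i]).
Local Notation e := (Defs.eta R n).
Local Notation w := (omega R n).

Lemma sgn_exprn : s ^+ n = 'i.
Proof.
have [k n_eq] : exists k, n = k.*2.+1.
  by exists n./2; rewrite -[LHS]odd_double_half n_odd.
have half_eq : ((n + 1) %/ 2 = k.+1)%N by rewrite n_eq addn1 -doubleS -muln2 mulnK.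
have s_sqr : s ^+ 2 = -1 by rewrite expr_div_n sqrr_sign sqr_i div1r invrN1.
rewrite {2}n_eq exprS -muln2 mulnC exprM s_sqr half_eq mulrAC -exprD -signr_odd.
rewrite addSn addnn /= odd_double /= expr1.
by apply: (mulIf (i_neq0 R)); rewrite divfK ?i_neq0 // -expr2 sqr_i.
Qed.

Let n_gt0 : (0 < n)%N. Proof. by case: n n_odd. Qed.
Let natn_neq0 : n%:R != 0 :> R. Proof. by rewrite pnatr_eq0 -lt0n. Qed.

Lemma eta_exprn : e ^+ n = 'i.
Proof.
by rewrite /Defs.eta expiX -[_ *+ n]mulr_natr -expi_pihalf; congr expi; field.
Qed.

Lemma omega_prim : n.-primitive_root w.
Proof.
have w_n : w ^+ n = 1.
  rewrite /omega expiX -[_ *+ n]mulr_natr divfK //.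
  by rewrite /expi mulr_natl cos2pi sin2pi.
have [m m_prim m_dvd] := prim_order_exists n_gt0 w_n.
suff m_eq : m = n by move: m_prim; rewrite m_eq.
have m_gt0 := prim_order_gt0 m_prim.
apply/eqP; rewrite eqn_leq dvdn_leq //= leqNgt; apply/negP => m_lt.
have := prim_expr_order m_prim; apply/eqP; rewrite /omega expiX; apply: expi_neq1.
have ratio_bounds : 0 < (m%:R / n%:R : R) < 1.
  by rewrite divr_gt0 ?ltr0n //= ltr_pdivrMr ?ltr0n // mul1r ltr_nat.
rewrite -[_ *+ m]mulr_natr (_ : _ * _ = pi *+ 2 * (m%:R / n%:R)); last first.
  by rewrite -mulr_natl; field.
by have := @pi_gt0 R; nra.
Qed.

Let e_neq0 : e != 0. Proof. exact: expi_neq0. Qed.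

Lemma sgn_etaV_exprn : (s * d / e) ^+ n = d ^+ n.
Proof.
by rewrite expr_div_n [(s * _) ^+ n]exprMn sgn_exprn eta_exprn mulrAC divff ?i_neq0 ?mul1r.
Qed.

Lemma sgn_eta_exprn : (s * d * e) ^+ n = (- d) ^+ n.
Proof.
rewrite [(s * d * _) ^+ n]exprMn [(s * _) ^+ n]exprMn sgn_exprn eta_exprn mulrAC -expr2 sqr_i mulN1r.
by rewrite exprNn -signr_odd n_odd expr1 mulN1r.
Qed.

Lemma Xmat_eigcomb (j k : nat) :
  Xmat R n j k = (s * d / e * w ^+ k) *: P + (s * d * e * w ^+ j) *: (1 - P).
Proof.
apply/matrixP => r c; rewrite !mxE.
by case: (ord2_cases r) => ->; case: (ord2_cases c) => ->; rewrite /= ?mxE /= xiV;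
  field; rewrite -xiV xi_subV_neq0 i_neq0 e_neq0.
Qed.

Let sgn_d_neq0 : s * d != 0.
Proof. by rewrite !mulf_neq0 ?signr_eq0 ?invr_eq0 ?i_neq0 ?xi_subV_neq0. Qed.

Lemma Cmat_root_Xmat (X : 'M[R[i]]_2) :
  X ^+ n = Cmat R ^+ n <-> exists j k : 'I_n, X = Xmat R n j k.
Proof.
have rootsV := exprn_eq_mul_prim_root omega_prim _ (mulf_neq0 sgn_d_neq0 (invr_neq0 e_neq0)).
have roots := exprn_eq_mul_prim_root omega_prim _ (mulf_neq0 sgn_d_neq0 e_neq0).
rewrite Cmat_root_eigcomb -sgn_etaV_exprn -sgn_eta_exprn.
split=> [[p [q [-> /rootsV[k ->] /roots[j ->]]]] | [j [k ->]]].
  by exists j, k; rewrite Xmat_eigcomb.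
exists (s * d / e * w ^+ k), (s * d * e * w ^+ j); split.
- exact: Xmat_eigcomb.
- by apply/rootsV; exists k.
- by apply/roots; exists j.
Qed.

Lemma Xmat_inj (j k j' k' : 'I_n) : Xmat R n j k = Xmat R n j' k' -> j = j' /\ k = k'.
Proof.
have [P_neq0 P_neq1] := eigproj_nontrivial two_neq0 xi_subV_neq0 Cmat_nonscalar.
rewrite !Xmat_eigcomb => /(idem_comb_inj P_idem P_neq0 P_neq1)[].
move=> /(mul_prim_root_inj omega_prim (mulf_neq0 sgn_d_neq0 (invr_neq0 e_neq0))) <-.
by move=> /(mul_prim_root_inj omega_prim (mulf_neq0 sgn_d_neq0 e_neq0)) <-.
Qed.

End OddExponent.
End Solutions.

Theorem mainTheorem1 (R : realType) (n : nat) (hn3 : (3 <= n)%N) (hodd : odd n) :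
  (forall X : 'M[R[i]]_2,
     X ^+ n = (Cmat R) ^+ n <->
     exists (j : 'I_n) (k : 'I_n), X = Xmat R n j k) /\
  (forall j k j' k' : 'I_n, Xmat R n j k = Xmat R n j' k' -> j = j' /\ k = k').
Proof.
by split; [exact: Cmat_root_Xmat | exact: Xmat_inj].
Qed.
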